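(* Let $S$ be an $E$-solid locally inverse semigroup and $\rho$ an inverse semigroup congruence on $S$ such that every idempotent $\rho$-class is a completely simple subsemigroup of $S$; put $T=S/\rho$. For every $\alpha,\beta\in T$ with $\alpha\ge\beta$ (natural partial order of $T$) and every $s\in\alpha$ (viewing $\alpha$ as a $\rho$-class), there exists a unique $t\in\beta$ such that $s\ge t$ in the natural partial order of $S$.
   Context: A semigroup is locally inverse if it is regular and every local submonoid $eSe$ ($e$ idempotent) is inverse; $E$-solid means the subsemigroup generated by the idempotents is completely regular. The natural partial order on a regular semigroup: $s\le t$ iff $s=et=tf$ for some idempotents $e,f$. *)

Section SG.
Variable S : Type.
Variable mul : S -> S -> S.

Definition associative_op : Prop :=
  forall x y z, mul x (mul y z) = mul (mul x y) z.

Definition idem (e : S) : Prop := mul e e = e.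

Definition nat_le (s t : S) : Prop :=
  exists e f, idem e /\ idem f /\ s = mul e t /\ s = mul t f.

Definition regular : Prop :=
  forall x, exists y, mul (mul x y) x = x.

Definition subsemigroup (A : S -> Prop) : Prop :=
  forall x y, A x -> A y -> A (mul x y).

Definition inverse_sub (A : S -> Prop) : Prop :=
  forall x, A x -> exists y, (A y /\ mul (mul x y) x = x /\ mul (mul y x) y = y) /\
     forall y', A y' -> mul (mul x y') x = x -> mul (mul y' x) y' = y' -> y' = y.

Definition local_submonoid (e : S) : S -> Prop :=
  fun x => exists s, x = mul (mul e s) e.

Definition locally_inverse : Prop :=
  regular /\ forall e, idem e -> inverse_sub (local_submonoid e).

Inductive gen_idem : S -> Prop :=
  | gen_idem_base : forall e, idem e -> gen_idem e
  | gen_idem_mul : forall x y, gen_idem x -> gen_idem y -> gen_idem (mul x y).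

Definition subgroup (G : S -> Prop) : Prop :=
  subsemigroup G /\
  exists u, G u /\ (forall g, G g -> mul u g = g /\ mul g u = g) /\
    (forall g, G g -> exists h, G h /\ mul g h = u /\ mul h g = u).

Definition completely_regular_sub (A : S -> Prop) : Prop :=
  forall x, A x -> exists G, subgroup G /\ (forall g, G g -> A g) /\ G x.

Definition E_solid : Prop := completely_regular_sub gen_idem.

Definition ideal_of (C I : S -> Prop) : Prop :=
  (forall x, I x -> C x) /\ (exists x, I x) /\
  (forall c x, C c -> I x -> I (mul c x) /\ I (mul x c)).

Definition simple_sub (C : S -> Prop) : Prop :=
  forall I, ideal_of C I -> forall x, C x -> I x.

Definition primitive_idem_in (C : S -> Prop) (e : S) : Prop :=
  C e /\ idem e /\
  forall f, C f -> idem f -> f = mul e f -> f = mul f e -> f = e.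

Definition completely_simple_sub (C : S -> Prop) : Prop :=
  subsemigroup C /\ simple_sub C /\ exists e, primitive_idem_in C e.

Definition congruence (rho : S -> S -> Prop) : Prop :=
  (forall x, rho x x) /\ (forall x y, rho x y -> rho y x) /\
  (forall x y z, rho x y -> rho y z -> rho x z) /\
  (forall x y z, rho x y -> rho (mul z x) (mul z y) /\ rho (mul x z) (mul y z)).

(* S/rho is an inverse semigroup, stated on representatives:
   every class [x] has a unique inverse class *)
Definition inverse_congruence (rho : S -> S -> Prop) : Prop :=
  congruence rho /\
  forall x, exists y, (rho (mul (mul x y) x) x /\ rho (mul (mul y x) y) y) /\
    forall y', rho (mul (mul x y') x) x -> rho (mul (mul y' x) y') y' -> rho y' y.

(* natural partial order on S/rho on representatives: [b] <= [a] iff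
   [b] = [e][a] = [a][f] with [e], [f] idempotents of S/rho *)
Definition quot_le (rho : S -> S -> Prop) (b a : S) : Prop :=
  exists e f, rho (mul e e) e /\ rho (mul f f) f /\
    rho b (mul e a) /\ rho b (mul a f).

End SG.
Arguments associative_op {S}. Arguments locally_inverse {S}. Arguments E_solid {S}. Arguments inverse_congruence {S}. Arguments completely_simple_sub {S}. Arguments quot_le {S}. Arguments nat_le {S}.

From Stdlib Require Import Setoid Morphisms.

(* Fix s' with s ⋅ s' ⋅ s = s and the idempotent p = s ⋅ s'.  Every t ≤ s equals
   h ⋅ s for the idempotent h = p ⋅ t ⋅ s' of the inverse monoid pSp.  For
   existence, with β = [e]α, take h = x ⋅ x⁻¹ in pSp for x = p ⋅ e ⋅ p: then h is
   ρ-equivalent to e ⋅ p, so h ⋅ s lies in β.  For uniqueness, the idempotents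
   attached to two candidates commute (pSp is inverse) and are ρ-related, so they
   lie in one completely simple ρ-class, where all idempotents are primitive and
   commuting idempotents therefore coincide. *)

Ltac regroup t :=
  match goal with mulA : associative_op _ |- _ =>
    transitivity t; [rewrite ?mulA; reflexivity |]
  end.

Section InverseUpToEquivalence.
Context {S : Type} {mul : S -> S -> S} (mulA : associative_op mul).
Local Infix "⋅" := mul (at level 40, left associativity).
Context {R : S -> S -> Prop} `{!Equivalence R} `{!Proper (R ==> R ==> R) mul}.
Context {A : S -> Prop} (A_mul : subsemigroup S mul A).
Hypothesis A_inverse : forall x, A x ->
  exists y, (A y /\ R (x ⋅ y ⋅ x) x /\ R (y ⋅ x ⋅ y) y) /\
    forall y', A y' -> R (x ⋅ y' ⋅ x) x -> R (y' ⋅ x ⋅ y') y' -> R y' y.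

Lemma inverse_unique x y z : A x -> A y -> A z ->
  R (x ⋅ y ⋅ x) x -> R (y ⋅ x ⋅ y) y -> R (x ⋅ z ⋅ x) x -> R (z ⋅ x ⋅ z) z -> R y z.
Proof.
  intros Ax Ay Az Hy1 Hy2 Hz1 Hz2.
  destruct (A_inverse x Ax) as [w [_ Hw]].
  transitivity w; [| symmetry]; apply Hw; assumption.
Qed.

(* The inverse x of u ⋅ v is pinned down by showing that v ⋅ x ⋅ u is another inverse. *)
Lemma idem_mul u v : A u -> A v -> R (u ⋅ u) u -> R (v ⋅ v) v ->
  R (u ⋅ v ⋅ (u ⋅ v)) (u ⋅ v).
Proof.
  intros Au Av Hu Hv.
  destruct (A_inverse (u ⋅ v)) as [x [[Ax [Hx1 Hx2]] _]]; [auto |].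
  assert (Hvxu : R (v ⋅ x ⋅ u) x).
  { apply (inverse_unique (u ⋅ v)); auto.
    - regroup (u ⋅ (v ⋅ v) ⋅ x ⋅ (u ⋅ u) ⋅ v). rewrite Hu, Hv.
      regroup (u ⋅ v ⋅ x ⋅ (u ⋅ v)). exact Hx1.
    - regroup (v ⋅ x ⋅ (u ⋅ u) ⋅ (v ⋅ v) ⋅ x ⋅ u). rewrite Hu, Hv.
      regroup (v ⋅ (x ⋅ (u ⋅ v) ⋅ x) ⋅ u). rewrite Hx2. reflexivity. }
  assert (Hxx : R (x ⋅ x) x).
  { rewrite <- Hvxu. regroup (v ⋅ (x ⋅ (u ⋅ v) ⋅ x) ⋅ u). rewrite Hx2. reflexivity. }
  assert (Hxxx : R (x ⋅ x ⋅ x) x) by (rewrite !Hxx; reflexivity).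
  assert (Huv : R (u ⋅ v) x) by (apply (inverse_unique x); auto).
  rewrite Huv. exact Hxx.
Qed.

Lemma idem_comm u v : A u -> A v -> R (u ⋅ u) u -> R (v ⋅ v) v -> R (u ⋅ v) (v ⋅ u).
Proof.
  intros Au Av Hu Hv.
  pose proof (idem_mul u v Au Av Hu Hv) as Huv.
  pose proof (idem_mul v u Av Au Hv Hu) as Hvu.
  apply (inverse_unique (u ⋅ v)); auto.
  - rewrite !Huv. reflexivity.
  - rewrite !Huv. reflexivity.
  - regroup (u ⋅ (v ⋅ v) ⋅ (u ⋅ u) ⋅ v). rewrite Hu, Hv.
    regroup (u ⋅ v ⋅ (u ⋅ v)). exact Huv.
  - regroup (v ⋅ (u ⋅ u) ⋅ (v ⋅ v) ⋅ u). rewrite Hu, Hv.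
    regroup (v ⋅ u ⋅ (v ⋅ u)). exact Hvu.
Qed.

End InverseUpToEquivalence.

Section SimpleSubsemigroup.
Context {S : Type} {mul : S -> S -> S} (mulA : associative_op mul).
Local Infix "⋅" := mul (at level 40, left associativity).
Context {C : S -> Prop} (C_mul : subsemigroup S mul C) (C_simple : simple_sub S mul C).

Lemma simple_sub_factor e x : C e -> C x -> exists u v, C u /\ C v /\ x = u ⋅ e ⋅ v.
Proof.
  intros Ce Cx.
  apply (C_simple (fun y => exists u v, C u /\ C v /\ y = u ⋅ e ⋅ v)); [| exact Cx].
  split; [| split].
  - intros y [u [v [Cu [Cv ->]]]]. auto.
  - exists (e ⋅ e ⋅ e), e, e. auto.
  - intros c y Cc [u [v [Cu [Cv ->]]]]. split.
    + exists (c ⋅ u), v. rewrite !mulA. auto.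
    + exists u, (v ⋅ c). rewrite !mulA. auto.
Qed.

(* Write f = u' ⋅ v' through the primitive idempotent e; then v' ⋅ g ⋅ u' lies
   below e, hence equals e, and g = f ⋅ g ⋅ f collapses to f. *)
Lemma idem_below_eq e f g : primitive_idem_in S mul C e ->
  C f -> C g -> idem S mul f -> idem S mul g -> g = f ⋅ g -> g = g ⋅ f -> g = f.
Proof.
  intros [Ce [He e_min]] Cf Cg Hf Hg Hfg Hgf. unfold idem in *.
  destruct (simple_sub_factor e f Ce Cf) as [u [v [Cu [Cv Hf_uev]]]].
  set (u' := f ⋅ u ⋅ e). set (v' := e ⋅ v ⋅ f).
  assert (Hu'e : u' ⋅ e = u') by (unfold u'; rewrite <- mulA, He; reflexivity).
  assert (Hu'v' : u' ⋅ v' = f).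
  { unfold u', v'. regroup (f ⋅ (u ⋅ (e ⋅ e) ⋅ v) ⋅ f).
    rewrite He, <- Hf_uev, Hf, Hf. reflexivity. }
  assert (Hgfg : g ⋅ f ⋅ g = g) by (rewrite <- Hgf; exact Hg).
  assert (Hw : v' ⋅ g ⋅ u' = e).
  { apply e_min.
    - unfold u', v'. auto.
    - regroup (v' ⋅ (g ⋅ (u' ⋅ v') ⋅ g) ⋅ u'). rewrite Hu'v', Hgfg. reflexivity.
    - symmetry. unfold v'. regroup ((e ⋅ e) ⋅ v ⋅ f ⋅ g ⋅ u'). rewrite He. reflexivity.
    - symmetry. regroup (v' ⋅ g ⋅ (u' ⋅ e)). rewrite Hu'e. reflexivity. }
  transitivity (f ⋅ g ⋅ f); [rewrite <- Hfg; exact Hgf |].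
  rewrite <- Hu'v' at 1 2.
  regroup (u' ⋅ (v' ⋅ g ⋅ u') ⋅ v'). rewrite Hw, Hu'e. exact Hu'v'.
Qed.

Lemma commuting_idem_eq e f g : primitive_idem_in S mul C e ->
  C f -> C g -> idem S mul f -> idem S mul g -> f ⋅ g = g ⋅ f -> f = g.
Proof.
  intros He Cf Cg Hf Hg Hcomm. unfold idem in *.
  assert (Hfgf : f ⋅ g ⋅ f = f ⋅ g) by (rewrite <- mulA, <- Hcomm, mulA, Hf; reflexivity).
  assert (Hfgg : f ⋅ g ⋅ g = f ⋅ g) by (rewrite <- mulA, Hg; reflexivity).
  assert (Hfg_idem : idem S mul (f ⋅ g)) by (red; rewrite mulA, Hfgf; exact Hfgg).
  assert (Hfg_f : f ⋅ g = f).
  { apply (idem_below_eq e); auto. rewrite mulA, Hf. reflexivity. }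
  assert (Hfg_g : f ⋅ g = g).
  { apply (idem_below_eq e); auto. rewrite Hcomm, mulA, Hg. reflexivity. }
  rewrite <- Hfg_f. exact Hfg_g.
Qed.

End SimpleSubsemigroup.

Section Congruence.
Context {S : Type} {mul : S -> S -> S} {rho : S -> S -> Prop}.

Lemma congruence_equivalence : congruence S mul rho -> Equivalence rho.
Proof. intros [Hrefl [Hsym [Htrans _]]]. split; assumption. Qed.

Lemma congruence_proper : congruence S mul rho -> Proper (rho ==> rho ==> rho) mul.
Proof.
  intros [_ [_ [Htrans Hcomp]]] x x' Hx y y' Hy.
  apply Htrans with (mul x' y); apply Hcomp; assumption.
Qed.

Lemma inverse_congruence_inverses : inverse_congruence mul rho ->
  forall x, True -> exists y, (True /\ rho (mul (mul x y) x) x /\ rho (mul (mul y x) y) y) /\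
    forall y', True -> rho (mul (mul x y') x) x -> rho (mul (mul y' x) y') y' -> rho y' y.
Proof.
  intros [_ Hinv] x _. destruct (Hinv x) as [y [[Hy1 Hy2] Hy]].
  exists y. auto.
Qed.

End Congruence.

Section LocalSubmonoid.
Context {S : Type} {mul : S -> S -> S} (mulA : associative_op mul).
Local Infix "⋅" := mul (at level 40, left associativity).

Lemma local_submonoid_mul e : subsemigroup S mul (local_submonoid S mul e).
Proof.
  intros x y [a ->] [b ->]. exists (a ⋅ e ⋅ e ⋅ b). rewrite !mulA. reflexivity.
Qed.

Lemma local_submonoid_id e x : idem S mul e -> local_submonoid S mul e x ->
  e ⋅ x = x /\ x ⋅ e = x.
Proof.
  intros He [a ->]. unfold idem in He. split.
  - rewrite !mulA, He. reflexivity.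
  - rewrite <- mulA, He. reflexivity.
Qed.

End LocalSubmonoid.

Section BelowRegularElement.
Context {S : Type} {mul : S -> S -> S} (mulA : associative_op mul).
Local Infix "⋅" := mul (at level 40, left associativity).
Context (s s' : S) (Hss : s ⋅ s' ⋅ s = s).
Local Notation p := (s ⋅ s').

Lemma idem_mul_regular : idem S mul p.
Proof. red. rewrite mulA, Hss. reflexivity. Qed.

Lemma nat_le_local_idem t : nat_le mul t s ->
  idem S mul (p ⋅ t ⋅ s') /\ local_submonoid S mul p (p ⋅ t ⋅ s') /\ p ⋅ t ⋅ s' ⋅ s = t.
Proof.
  intros [e [f [He [Hf [Hte Htf]]]]]. unfold idem in *.
  assert (Hts : t ⋅ s' ⋅ s = t).
  { rewrite Hte. regroup (e ⋅ (s ⋅ s' ⋅ s)). rewrite Hss. reflexivity. }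
  assert (Htt : t ⋅ s' ⋅ t = t).
  { rewrite Htf at 2. regroup (t ⋅ s' ⋅ s ⋅ f). rewrite Hts, Htf.
    regroup (s ⋅ (f ⋅ f)). rewrite Hf. reflexivity. }
  split; [| split].
  - regroup (p ⋅ (t ⋅ s' ⋅ s) ⋅ s' ⋅ t ⋅ s'). rewrite Hts.
    regroup (p ⋅ (t ⋅ s' ⋅ t) ⋅ s'). rewrite Htt. reflexivity.
  - exists (p ⋅ t ⋅ s'). symmetry.
    regroup ((s ⋅ s' ⋅ s) ⋅ s' ⋅ (t ⋅ s' ⋅ s) ⋅ s'). rewrite Hss, Hts. reflexivity.
  - regroup (p ⋅ (t ⋅ s' ⋅ s)). rewrite Hts, Htf.
    regroup ((s ⋅ s' ⋅ s) ⋅ f). rewrite Hss. reflexivity.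
Qed.

Lemma local_idem_nat_le h : idem S mul h -> local_submonoid S mul p h -> nat_le mul (h ⋅ s) s.
Proof.
  intros Hh Mh. destruct (local_submonoid_id mulA p h idem_mul_regular Mh) as [Hph Hhp].
  unfold idem in Hh.
  exists h, (s' ⋅ h ⋅ s). repeat split; auto.
  - red. regroup (s' ⋅ (h ⋅ p ⋅ h) ⋅ s). rewrite Hhp, Hh. reflexivity.
  - symmetry. regroup (p ⋅ h ⋅ s). rewrite Hph. reflexivity.
Qed.

End BelowRegularElement.

Section QuotientOrder.
Context {S : Type} {mul : S -> S -> S} (mulA : associative_op mul).
Local Infix "⋅" := mul (at level 40, left associativity).
Context {rho : S -> S -> Prop} (rho_cong : congruence S mul rho).
Local Instance rho_equivalence : Equivalence rho := congruence_equivalence rho_cong.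
Local Instance mul_rho_proper : Proper (rho ==> rho ==> rho) mul := congruence_proper rho_cong.
Context (s s' : S) (Hss : s ⋅ s' ⋅ s = s).
Local Notation p := (s ⋅ s').
Hypothesis local_inverse : inverse_sub S mul (local_submonoid S mul p).

Lemma nat_le_rho_unique t1 t2 :
  (forall a, rho (a ⋅ a) a -> completely_simple_sub mul (rho a)) ->
  nat_le mul t1 s -> nat_le mul t2 s -> rho t1 t2 -> t1 = t2.
Proof.
  intros Hcs N1 N2 R12.
  destruct (nat_le_local_idem mulA s s' Hss t1 N1) as [I1 [M1 Ht1]].
  destruct (nat_le_local_idem mulA s s' Hss t2 N2) as [I2 [M2 Ht2]].
  assert (Hk : rho (p ⋅ t1 ⋅ s') (p ⋅ t2 ⋅ s')) by (rewrite R12; reflexivity).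
  assert (Hcomm : p ⋅ t1 ⋅ s' ⋅ (p ⋅ t2 ⋅ s') = p ⋅ t2 ⋅ s' ⋅ (p ⋅ t1 ⋅ s')).
  { apply (idem_comm mulA (R := eq) (local_submonoid_mul mulA p) local_inverse); assumption. }
  destruct (Hcs (p ⋅ t1 ⋅ s')) as [C_mul [C_simple [e He]]]; [rewrite I1; reflexivity |].
  rewrite <- Ht1, <- Ht2. f_equal.
  apply (commuting_idem_eq mulA C_mul C_simple e _ _ He); [reflexivity | exact Hk | assumption ..].
Qed.

Lemma local_idem_rho e : inverse_congruence mul rho -> rho (e ⋅ e) e ->
  exists h, idem S mul h /\ local_submonoid S mul p h /\ rho h (e ⋅ p).
Proof.
  intros rho_inv He.
  pose proof (inverse_congruence_inverses rho_inv) as T_inverse.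
  assert (T_mul : subsemigroup S mul (fun _ => True)) by (intros x y _ _; exact I).
  pose proof (idem_mul_regular mulA s s' Hss) as Hp.
  assert (Hp_rho : rho (p ⋅ p) p) by (rewrite Hp; reflexivity).
  set (q := e ⋅ p).
  assert (Hqq : rho (q ⋅ q) q) by exact (idem_mul mulA T_mul T_inverse e p I I He Hp_rho).
  set (x := p ⋅ e ⋅ p).
  assert (Mx : local_submonoid S mul p x) by (exists e; reflexivity).
  destruct (local_inverse x Mx) as [y [[My [Hxyx Hyxy]] _]].
  assert (Hxq : rho x q).
  { unfold x, q. rewrite (idem_comm mulA T_mul T_inverse p e I I Hp_rho He).
    regroup (e ⋅ (p ⋅ p)). rewrite Hp. reflexivity. }
  assert (Hyq : rho y q).
  { assert (Hqqq : rho (q ⋅ q ⋅ q) q) by (rewrite !Hqq; reflexivity).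
    apply (inverse_unique T_inverse q y q); auto; rewrite <- Hxq.
    - rewrite Hxyx. reflexivity.
    - rewrite Hyxy. reflexivity. }
  exists (x ⋅ y). repeat split.
  - red. rewrite mulA, Hxyx. reflexivity.
  - apply local_submonoid_mul; assumption.
  - rewrite Hxq, Hyq. exact Hqq.
Qed.

End QuotientOrder.

Theorem lemma4p1 (S : Type) (mul : S -> S -> S)
  (Hassoc : associative_op mul)
  (Hli : locally_inverse mul) (Hes : E_solid mul)
  (rho : S -> S -> Prop) (Hrho : inverse_congruence mul rho)
  (Hcs : forall a, rho (mul a a) a -> completely_simple_sub mul (rho a)) :
  forall a b : S, quot_le mul rho b a ->
  forall s, rho s a ->
  exists t, (rho t b /\ nat_le mul t s) /\
    forall t', rho t' b -> nat_le mul t' s -> t' = t.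
Proof.
  intros a b [e [_ [He [_ [Hb _]]]]] s Hs.
  destruct Hli as [Hreg Hloc]. destruct (Hreg s) as [s' Hss].
  pose proof (proj1 Hrho) as rho_cong.
  pose proof (congruence_equivalence rho_cong).
  pose proof (congruence_proper rho_cong).
  pose proof (Hloc _ (idem_mul_regular Hassoc s s' Hss)) as Hloc_s.
  destruct (local_idem_rho Hassoc rho_cong s s' Hss Hloc_s e Hrho He) as [h [Hh [Mh Hhe]]].
  assert (Hhs_b : rho (mul h s) b).
  { rewrite Hhe, Hb, <- Hs, <- Hassoc, Hss. reflexivity. }
  pose proof (local_idem_nat_le Hassoc s s' Hss h Hh Mh) as Hhs_le.
  exists (mul h s). split; [split; assumption |].
  intros t Ht_b Ht_le.
  apply (nat_le_rho_unique Hassoc rho_cong s s' Hss Hloc_s t (mul h s) Hcs Ht_le Hhs_le).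
  rewrite Ht_b, Hhs_b. reflexivity.
Qed.
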